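(* Let $G$ be the full group of a Bratteli diagram $B$ whose path space $X$ is a Cantor set and such that $G$ acts minimally on $X$. If $G$ is a simple non-trivial group, then $B$ can be telescoped so that in the new diagram each pair of vertices from consecutive levels is connected by an even number (at least two) of edges.
   Context: A Bratteli diagram $B=(V,E)$: finite vertex sets $V_0=\{v_0\},V_1,\dots$, finite edge sets $E_1,E_2,\dots$, maps $s:E_i\to V_{i-1}$, $r:E_i\to V_i$ with $r(E_i)=V_i$, $s^{-1}(v)\ne\emptyset$ for all $v$, $r^{-1}(v)\ne\emptyset$ for $v\ne v_0$. Path space $X$: infinite paths $(e_1,e_2,\dots)$ from $v_0$, topologized by cylinder sets. $G_n$: homeomorphisms of $X$ that change only the first $n$ edges of each path, replacing $(e_1,\dots,e_n)$ by a path from $v_0$ ending at $r(e_n)$ (depending only on $(e_1,\dots,e_n)$); full group $G=\bigcup_nG_n$. A telescope of $B$ along $0=m_0<m_1<\cdots$ is the diagram $B'$ with $V'_n=V_{m_n}$ and $E'_n$ the set of finite paths of $B$ between levels $m_{n-1}$ and $m_n$ (it has the same path space and the same full group). *)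

From mathcomp Require Import all_boot.
Set Implicit Arguments. Unset Strict Implicit. Unset Printing Implicit Defensive.

(* A Bratteli diagram.  Level-shift convention: [E n] is the (finite) set of
   edges between level n and level n+1 (the paper's E_{n+1});
   [src e : V n], [rng e : V n.+1]. *)
Record bratteli := Bratteli {
  V : nat -> finType;
  E : nat -> finType;
  src : forall n, E n -> V n;
  rng : forall n, E n -> V n.+1;
  V0_single : #|V 0| = 1;
  rng_onto : forall n (w : V n.+1), exists e : E n, rng e = w;
  src_onto : forall n (v : V n), exists e : E n, src e = v
}.

Section Bratteli.
Variable B : bratteli.

Definition path := {x : forall n, E B n | forall n, rng (x n) = src (x n.+1)}.

Definition cyl (n : nat) (x : path) : path -> Prop :=
  fun y => forall k, k < n -> sval y k = sval x k.

Definition open_set (U : path -> Prop) : Prop :=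
  forall x, U x -> exists n, forall y, cyl n x y -> U y.

Definition continuous_map (f : path -> path) : Prop :=
  forall U, open_set U -> open_set (fun x => U (f x)).

Definition homeomorphism (f : path -> path) : Prop :=
  exists g : path -> path,
    cancel f g /\ cancel g f /\ continuous_map f /\ continuous_map g.

(* X is a Cantor set.  The path space with the cylinder topology is always
   compact, metrizable and totally disconnected; so it is a Cantor set iff it
   is nonempty and has no isolated points. *)
Definition cantor_path_space : Prop :=
  inhabited path /\
  forall (x : path) n, exists y : path, cyl n x y /\ y <> x.

Definition in_Gn (n : nat) (g : path -> path) : Prop :=
  [/\ homeomorphism g,
      forall x k, n <= k -> sval (g x) k = sval x k &
      forall x y, cyl n x y -> cyl n (g x) (g y)].

Definition in_G (g : path -> path) : Prop := exists n, in_Gn n g.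

Definition G_minimal : Prop :=
  forall (x y : path) n, exists g, in_G g /\ cyl n y (g x).

Definition normal_subgroup_of_G (N : (path -> path) -> Prop) : Prop :=
  [/\ forall h, N h -> in_G h,
      N id,
      forall h1 h2, N h1 -> N h2 -> N (h1 \o h2),
      forall h h', N h -> in_G h' -> cancel h h' -> cancel h' h -> N h' &
      forall g g' h, in_G g -> in_G g' -> cancel g g' -> cancel g' g ->
        N h -> N (g \o h \o g')].

Definition G_simple_nontrivial : Prop :=
  (exists g, in_G g /\ exists x, g x <> x) /\
  forall N, normal_subgroup_of_G N ->
    (forall h, N h -> forall x, h x = x) \/ (forall g, in_G g -> N g).

Definition same_vertex (a b : nat) (v : V B a) (w : V B b) : bool :=
  match a =P b with
  | ReflectT H => eq_rect a (fun l => Finite.sort (V B l)) v b H == w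
  | ReflectF _ => false
  end.

(* number of finite paths from v in V a down to w in V b (0 if b < a, and 1
   or 0 if a = b according as v = w); for a < b these are exactly the edges
   between v and w in a telescope of B having a and b as consecutive levels *)
Fixpoint npaths (a : nat) (v : V B a) (b : nat) : V B b -> nat :=
  match b with
  | 0 => fun w => same_vertex v w
  | b'.+1 => fun w =>
      if a <= b' then \sum_(e : E B b' | rng e == w) npaths v (src e)
      else same_vertex v w
  end.

Definition telescopable_even : Prop :=
  exists m : nat -> nat,
    [/\ m 0 = 0,
        forall n, m n < m n.+1 &
        forall n (v : V B (m n)) (w : V B (m n.+1)),
          2 <= npaths v w /\ ~~ odd (npaths v w)].

End Bratteli.

From Pilot Require Import Defs.
From mathcomp Require Import all_boot all_fingroup.
From Stdlib Require Import ClassicalEpsilon FunctionalExtensionality ProofIrrelevance Classical.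
Set Implicit Arguments. Unset Strict Implicit. Unset Printing Implicit Defensive.

(* For g in G_m and a vertex w of level m, g permutes the finite paths from
   v0 to w; the parity of this permutation is the signature sgn_m(g)(w).  At
   level m+1 the permutation is fibrewise over the last edge, so
   sgn_{m+1}(g)(w) is the sum of sgn_m(g)(s(e)) over the edges e into w.
   Hence the elements of G whose signatures vanish at all large levels form a
   normal subgroup N.  A transposition swapping two prefixes ending at u has
   signature npaths(u, w) mod 2 at every vertex w below; the product of two
   such transpositions with a common prefix lies in N and is not the
   identity.  By simplicity N = G, so npaths(u, w) is eventually even for
   every u that is the endpoint of two distinct prefixes; since X has no
   isolated points, every vertex of a deep enough level is such an endpoint,
   and the path counts factor through that level.  Minimality makes the path
   counts eventually positive, and telescoping along the resulting levels
   finishes the proof. *)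

(** * Parity of fibrewise permutations *)

Section FibrewisePerm.
Variables (A I : finType).

Definition fibre_fun (i : I) (s : {perm A}) (x : A * I) : A * I :=
  if x.2 == i then (s x.1, x.2) else x.

Lemma fibre_fun_inj i s : injective (fibre_fun i s).
Proof.
move=> [x1 x2] [y1 y2]; rewrite /fibre_fun /=.
case: eqP => [->|nx]; case: eqP => [->|ny] // [].
- by move=> /perm_inj ->.
- by move=> _ e; case: ny; rewrite -e.
- by move=> _ e; case: nx; rewrite e.
Qed.

Definition fibre_perm i s : {perm A * I} := perm (@fibre_fun_inj i s).

Lemma fibre_permE i s x : fibre_perm i s x = fibre_fun i s x.
Proof. by rewrite permE. Qed.

Lemma fibre_permM i s t : fibre_perm i (s * t)%g = (fibre_perm i s * fibre_perm i t)%g.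
Proof.
apply/permP => [[x1 x2]]; rewrite permM !fibre_permE /fibre_fun /=.
by case: (x2 =P i) => [->|ne] /=; rewrite ?eqxx ?permM // (introF eqP ne).
Qed.

Lemma fibre_perm1 i : fibre_perm i 1%g = 1%g.
Proof. by apply/permP => [[x1 x2]]; rewrite fibre_permE /fibre_fun /= !perm1; case: ifP. Qed.

Lemma fibre_perm_tperm i x y : fibre_perm i (tperm x y) = tperm (x, i) (y, i).
Proof.
apply/permP => [[z1 z2]]; rewrite fibre_permE /fibre_fun /=.
case: eqP => [->|nz].
  case: tpermP => [->|->|nx ny]; rewrite ?tpermL ?tpermR //.
  by rewrite tpermD //; apply/eqP => [[]] // e; [case: nx | case: ny].
by rewrite tpermD //; apply/eqP => [[]] _ e; case: nz.
Qed.

Lemma odd_fibre_perm i s : odd_perm (fibre_perm i s) = odd_perm s.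
Proof.
case: (prod_tpermP s) => ts -> dts.
rewrite (big_morph (fibre_perm i) (@fibre_permM i) (fibre_perm1 i)).
under eq_bigr => t _ do rewrite fibre_perm_tperm.
rewrite -(big_map (fun t => ((t.1, i), (t.2, i))) xpredT (fun t => tperm t.1 t.2)).
rewrite !odd_perm_prod ?size_map // all_map; apply: sub_all dts => [[x y]] /=.
by rewrite /dpair /= => nxy; apply/eqP => [[]] e; move: nxy; rewrite e eqxx.
Qed.

Variable s : I -> {perm A}.

Definition fibres_fun (r : seq I) (x : A * I) : A * I :=
  if x.2 \in r then (s x.2 x.1, x.2) else x.

Lemma fibres_fun_inj r : injective (fibres_fun r).
Proof.
move=> [x1 x2] [y1 y2]; rewrite /fibres_fun /=.
case: ifP => hx; case: ifP => hy [] //.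
- by move=> e1 e2; subst; move/perm_inj: e1 => ->.
- by move=> _ e; subst; rewrite hx in hy.
- by move=> _ e; subst; rewrite hx in hy.
- by move=> -> ->.
Qed.

Definition fibres_perm r : {perm A * I} := perm (@fibres_fun_inj r).

Lemma odd_fibres_perm r : uniq r ->
  odd_perm (fibres_perm r) = \big[addb/false]_(i <- r) odd_perm (s i).
Proof.
elim: r => [_|i r IH /andP [ni ur]].
  have -> : fibres_perm [::] = 1%g by apply/permP => x; rewrite permE /fibres_fun perm1.
  by rewrite big_nil odd_perm1.
have -> : fibres_perm (i :: r) = (fibre_perm i (s i) * fibres_perm r)%g.
  apply/permP => [[x1 x2]]; rewrite permM fibre_permE !permE /fibre_fun /fibres_fun /= inE.
  by case: eqP => [->|nx] /=; first rewrite (negbTE ni).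
by rewrite big_cons odd_permM odd_fibre_perm IH.
Qed.

Lemma odd_fibrewise_perm (t : {perm A * I}) :
  (forall a i, t (a, i) = (s i a, i)) ->
  odd_perm t = \big[addb/false]_(i : I) odd_perm (s i).
Proof.
move=> ht; have -> : t = fibres_perm (enum I).
  by apply/permP => [[a i]]; rewrite permE /fibres_fun /= mem_enum ht.
by rewrite odd_fibres_perm ?enum_uniq // big_enum.
Qed.

End FibrewisePerm.

Definition eventually (P : nat -> Prop) := exists K, forall M, K <= M -> P M.

Lemma eventually_and (P Q : nat -> Prop) :
  eventually P -> eventually Q -> eventually (fun M => P M /\ Q M).
Proof.
move=> [K1 H1] [K2 H2]; exists (maxn K1 K2) => M hM; split.
  by apply: H1; apply: leq_trans hM; rewrite leq_maxl.
by apply: H2; apply: leq_trans hM; rewrite leq_maxr.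
Qed.

Lemma eventually_forall (T : finType) (P : T -> nat -> Prop) :
  (forall t, eventually (P t)) -> eventually (fun M => forall t, P t M).
Proof.
move=> H.
suff [K HK] : eventually (fun M => forall t, t \in enum T -> P t M).
  by exists K => M hM t; apply: HK; rewrite ?mem_enum.
elim: (enum T) => [|t s IH]; first by exists 0.
have [K HK] := eventually_and (H t) IH.
by exists K => M hM t'; rewrite inE => /orP [/eqP ->|ht]; have [] := HK M hM; auto.
Qed.

Lemma increasing_chain (R : nat -> nat -> Prop) :
  (forall n, eventually (R n)) ->
  exists m : nat -> nat, [/\ m 0 = 0, forall i, m i < m i.+1 & forall i, R (m i) (m i.+1)].
Proof.
move=> H.
have H' n : exists M, n < M /\ R n M.
  by case: (H n) => K HK; exists (maxn K n.+1); rewrite leq_maxr; split => //; apply: HK; rewrite leq_maxl.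
pose f n := proj1_sig (constructive_indefinite_description _ (H' n)).
have hf n : n < f n /\ R n (f n).
  exact: (proj2_sig (constructive_indefinite_description _ (H' n))).
by exists (fun i => iter i f 0); split => // i; case: (hf (iter i f 0)).
Qed.

Section Bratteli.
Variable B : bratteli.
Local Notation P := (Defs.path B).
Local Notation Vt n := (V B n).
Local Notation Et n := (E B n).

(** * Paths, splicing and path counts *)

Lemma path_ext (x y : P) : (forall n, sval x n = sval y n) -> x = y.
Proof.
case: x => x hx; case: y => y hy /= h.
have e : x = y by apply: functional_extensionality_dep.
by subst; congr exist; apply: proof_irrelevance.
Qed.

Lemma V0_eq (u v : Vt 0) : u = v.
Proof. by have /fintype_le1P/(_ u) -> : #|V B 0| <= 1 by rewrite V0_single. Qed.

Lemma cyl_src m (x y : P) : cyl m x y -> src (sval x m) = src (sval y m).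
Proof.
case: m => [|k] h; first exact: V0_eq.
by rewrite -(proj2_sig x k) -(proj2_sig y k) h.
Qed.

Lemma cyl_le k m (x y : P) : k <= m -> cyl m x y -> cyl k x y.
Proof. by move=> hk h i hi; apply: h; apply: leq_trans hk. Qed.

Lemma cyl_sym m (x y : P) : cyl m x y -> cyl m y x.
Proof. by move=> h i hi; rewrite h. Qed.

Lemma cyl_trans m (x y z : P) : cyl m x y -> cyl m y z -> cyl m x z.
Proof. by move=> h1 h2 i hi; rewrite h2 // h1. Qed.

Lemma path_neq_edge (x y : P) : x <> y -> exists i, sval y i <> sval x i.
Proof.
move=> nxy; apply: NNPP => h; apply: nxy; apply: path_ext => i.
by apply: NNPP => h'; apply: h; exists i => e; apply: h'; rewrite e.
Qed.

Definition splice_fun m (a b : forall n, Et n) : forall n, Et n :=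
  fun n => if n < m then a n else b n.

Lemma splice_fun_chain m (a b : P) : src (sval a m) = src (sval b m) ->
  forall n, rng (splice_fun m (sval a) (sval b) n) = src (splice_fun m (sval a) (sval b) n.+1).
Proof.
move=> h n; rewrite /splice_fun.
case: (ltngtP n.+1 m) => hn.
- exact: (proj2_sig a).
- exact: (proj2_sig b).
- by rewrite (proj2_sig a) hn.
Qed.

(* Junk value b when a and b do not meet at level m. *)
Definition splice m (a b : P) : P :=
  match excluded_middle_informative (src (sval a m) = src (sval b m)) with
  | left h => exist _ (splice_fun m (sval a) (sval b)) (splice_fun_chain h)
  | right _ => b
  end.

Lemma spliceE m (a b : P) : src (sval a m) = src (sval b m) ->
  forall n, sval (splice m a b) n = if n < m then sval a n else sval b n.
Proof. by rewrite /splice => h n; case: excluded_middle_informative. Qed.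

Lemma cyl_splice m (a b : P) : src (sval a m) = src (sval b m) -> cyl m a (splice m a b).
Proof. by move=> h i hi; rewrite spliceE // hi. Qed.

Lemma splice_tail m (a b : P) : src (sval a m) = src (sval b m) ->
  forall n, m <= n -> sval (splice m a b) n = sval b n.
Proof. by move=> h n hn; rewrite spliceE // ltnNge hn. Qed.

Lemma exists_path_through (Q : forall n, Vt n -> Prop) :
  (forall v : Vt 0, Q 0 v) ->
  (forall n (u : Vt n), Q n u -> exists e : Et n, src e = u /\ Q n.+1 (rng e)) ->
  exists x : P, forall n, Q n (src (sval x n)).
Proof.
move=> h0 hs.
have H n (u : Vt n) : exists e : Et n, src e = u /\ (Q n u -> Q n.+1 (rng e)).
  case: (classic (Q n u)) => hp.
    by case: (hs n u hp) => e [he hp']; exists e.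
  by case: (src_onto u) => e he; exists e.
pose f n u := proj1_sig (constructive_indefinite_description _ (H n u)).
have hf n u : src (f n u) = u /\ (Q n u -> Q n.+1 (rng (f n u))).
  exact: (proj2_sig (constructive_indefinite_description _ (H n u))).
have /card_gt0P [d0 _] : 0 < #|V B 0| by rewrite V0_single.
pose vs := fix vs n : Vt n := match n with 0 => d0 | k.+1 => rng (f k (vs k)) end.
have ch n : rng (f n (vs n)) = src (f n.+1 (vs n.+1)) by rewrite (proj1 (hf _ _)).
exists (exist _ (fun n => f n (vs n)) ch) => n /=.
rewrite (proj1 (hf _ _)).
by elim: n => [|n IH] //=; apply: (proj2 (hf _ _)).
Qed.

Lemma same_vertexE a (v w : Vt a) : same_vertex v w = (v == w).
Proof. by rewrite /same_vertex; case: eqP => // H; rewrite (eq_irrelevance H (erefl a)). Qed.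

Lemma npaths_diag a (v w : Vt a) : npaths v w = (v == w).
Proof. by case: a v w => [|a] v w /=; rewrite ?ltnn same_vertexE. Qed.

Lemma npaths_diag_gt0 a (v w : Vt a) : 0 < npaths v w -> v = w.
Proof. by rewrite npaths_diag lt0b => /eqP. Qed.

Lemma npathsS a b (v : Vt a) (w : Vt b.+1) : a <= b ->
  npaths v w = \sum_(e : Et b | rng e == w) npaths v (src e).
Proof. by move=> h /=; rewrite h. Qed.

Lemma sum_npaths_diag k (F : Vt k -> nat) (w : Vt k) :
  \sum_(u : Vt k) F u * npaths u w = F w.
Proof.
rewrite (bigD1 w) //= npaths_diag eqxx muln1 big1 ?addn0 // => u hu.
by rewrite npaths_diag (negbTE hu) muln0.
Qed.

Lemma npaths_split a k b (v : Vt a) (w : Vt b) : a <= k -> k <= b ->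
  npaths v w = \sum_(u : Vt k) npaths v u * npaths u w.
Proof.
elim: b w => [|b IH] w hak hkb.
  by move: hkb; rewrite leqn0 => /eqP ek; subst k; rewrite sum_npaths_diag.
case: (ltngtP k b.+1) => hk.
- rewrite npathsS; last exact: leq_trans hak _.
  under eq_bigr => e _ do rewrite (IH _ hak hk).
  rewrite exchange_big /=; apply: eq_bigr => u _.
  by rewrite (_ : k <= b = true) // big_distrr.
- by move: hkb; rewrite leqNgt hk.
- by subst k; rewrite sum_npaths_diag.
Qed.

Lemma npaths_along_path (x : P) n k : n <= k ->
  0 < npaths (src (sval x n)) (src (sval x k)).
Proof.
elim: k => [|k IH] hk.
  by move: hk; rewrite leqn0 => /eqP e; subst n; rewrite npaths_diag eqxx.
case: (ltngtP n k.+1) => h.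
- rewrite npathsS // (bigD1 (sval x k)) /=; last by rewrite (proj2_sig x).
  by rewrite ltn_addr // IH.
- by move: hk; rewrite leqNgt h.
- by subst n; rewrite npaths_diag eqxx.
Qed.

Lemma npaths_gt0_last a b (v : Vt a) (w : Vt b.+1) : a <= b -> 0 < npaths v w ->
  exists e : Et b, rng e = w /\ 0 < npaths v (src e).
Proof.
move=> h; rewrite npathsS // => hp.
case: (pickP (fun e : Et b => (rng e == w) && (0 < npaths v (src e)))).
  by move=> e /andP [/eqP he hp']; exists e.
move=> h0; move: hp; rewrite big1 // => e he.
by move: (h0 e); rewrite he /= lt0n => /negbT; rewrite negbK => /eqP.
Qed.

Lemma npaths_gt0_first a b (v : Vt a) (w : Vt b) : a < b -> 0 < npaths v w ->
  exists e : Et a, src e = v /\ 0 < npaths (rng e) w.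
Proof.
move=> hab; rewrite (npaths_split v w (leqnSn a) hab) => hp.
case: (pickP (fun u : Vt a.+1 => (0 < npaths v u) && (0 < npaths u w))).
  move=> u /andP [h1 h2].
  case: (npaths_gt0_last (leqnn a) h1) => e [he h3].
  by exists e; rewrite he (npaths_diag_gt0 h3).
move=> h0; move: hp; rewrite big1 // => u _.
move: (h0 u); case: (npaths v u) => [|p]; first by rewrite mul0n.
by case: (npaths u w) => [|q]; rewrite ?muln0.
Qed.

Lemma npaths_root_gt0 (v0 : Vt 0) b (w : Vt b) : 0 < npaths v0 w.
Proof.
elim: b w => [|b IH] w; first by rewrite npaths_diag (V0_eq v0 w) eqxx.
case: (rng_onto w) => e he.
by rewrite npathsS // (bigD1 e) /= ?he ?eqxx // ltn_addr.
Qed.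

Lemma npaths_eq0_src a b (v : Vt a) (e : Et b) : a <= b ->
  npaths v (rng e) = 0 -> npaths v (src e) = 0.
Proof.
move=> h; rewrite npathsS // (bigD1 e) ?eqxx //=.
by move/eqP; rewrite addn_eq0 => /andP [/eqP -> _].
Qed.

Lemma npaths_gt0_up n (v : Vt n) M : n <= M -> (forall w : Vt M, 0 < npaths v w) ->
  forall M', M <= M' -> forall w : Vt M', 0 < npaths v w.
Proof.
move=> hn h; elim=> [|M' IH] hM w.
  by move: hM; rewrite leqn0 => /eqP e; subst M.
case: (ltngtP M M'.+1) => h1.
- case: (rng_onto w) => e he.
  rewrite npathsS; last exact: leq_trans hn h1.
  by rewrite (bigD1 e) /= ?he ?eqxx // ltn_addr // IH.
- by move: hM; rewrite leqNgt h1.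
- by subst M.
Qed.

Lemma path_through2 n0 L (u : Vt n0) (w : Vt L) : n0 <= L -> 0 < npaths u w ->
  exists z : P, src (sval z n0) = u /\ src (sval z L) = w.
Proof.
move=> hL hp.
pose Q n (v : Vt n) := (n <= n0 -> 0 < npaths v u) /\ (n0 <= n <= L -> 0 < npaths v w).
have [z hz] : exists z : P, forall n, Q n (src (sval z n)).
  apply: exists_path_through.
    move=> v; split => [_|]; first exact: npaths_root_gt0.
    by rewrite leqn0 => /andP [/eqP e _]; subst n0; rewrite (V0_eq v u).
  move=> n v [h1 h2].
  case: (ltnP n n0) => hn.
    case: (npaths_gt0_first hn (h1 (ltnW hn))) => e [he hp']; exists e; split => //.
    split => // /andP [h3 h4].
    have en : n.+1 = n0 by apply/eqP; rewrite eqn_leq hn h3.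
    by subst n0; rewrite (npaths_diag_gt0 hp').
  case: (ltnP n L) => hnL.
    have hp1 : 0 < npaths v w by apply: h2; rewrite hn ltnW.
    case: (npaths_gt0_first hnL hp1) => e [he hp']; exists e; split => //.
    by split => [|_ //]; rewrite leqNgt ltnS hn.
  case: (src_onto v) => e he; exists e; split => //; split.
    by rewrite leqNgt ltnS hn.
  by move=> /andP [_ h]; move: h; rewrite leqNgt ltnS hnL.
exists z; split.
  by case: (hz n0) => h1 _; apply: npaths_diag_gt0; apply: h1.
by case: (hz L) => _ h2; apply: npaths_diag_gt0; apply: h2; rewrite hL leqnn.
Qed.

Lemma Gn_tail m (g : P -> P) : in_Gn m g -> forall (x : P) k, m <= k -> sval (g x) k = sval x k.
Proof. by case. Qed.

Lemma Gn_cyl m (g : P -> P) : in_Gn m g -> forall x y : P, cyl m x y -> cyl m (g x) (g y).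
Proof. by case. Qed.

Lemma Gn_inj m (g : P -> P) : in_Gn m g -> injective g.
Proof. by case=> [[g' [h _]] _ _]; apply: can_inj h. Qed.

Lemma Gn_src m (g : P -> P) : in_Gn m g -> forall x : P, src (sval (g x) m) = src (sval x m).
Proof. by move=> h x; rewrite (Gn_tail h). Qed.

Lemma Gn_mono k m (g : P -> P) : k <= m -> in_Gn k g -> in_Gn m g.
Proof.
move=> hkm [hh ht hc]; split => // [x i hi|x y hxy i hi].
  by apply: ht; apply: leq_trans hi.
case: (ltnP i k) => hik; first exact: (hc x y (cyl_le hkm hxy)).
by rewrite !ht // hxy.
Qed.

Lemma in_G_eventually (g : P -> P) : in_G g -> eventually (fun M => in_Gn M g).
Proof. by case=> k hk; exists k => M hM; apply: Gn_mono hk. Qed.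

Lemma Gn_id m : in_Gn m (@id P).
Proof. by split => //; exists id; do 3 (split => //). Qed.

Lemma Gn_comp m (g h : P -> P) : in_Gn m g -> in_Gn m h -> in_Gn m (g \o h).
Proof.
move=> [[g' [c1 [c2 [c3 c4]]]] gt gc] [[h' [d1 [d2 [d3 d4]]]] ht hc].
split.
- exists (h' \o g'); split; first by move=> x /=; rewrite c1 d1.
  split; first by move=> x /=; rewrite d2 c2.
  by split => U hU; [exact: (d3 _ (c3 _ hU)) | exact: (c4 _ (d4 _ hU))].
- by move=> x k hk /=; rewrite gt // ht.
- by move=> x y hxy /=; apply: gc; apply: hc.
Qed.

Lemma in_G_comp (g h : P -> P) : in_G g -> in_G h -> in_G (g \o h).
Proof.
move=> [k1 h1] [k2 h2]; exists (maxn k1 k2); apply: Gn_comp.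
  by apply: Gn_mono h1; rewrite leq_maxl.
by apply: Gn_mono h2; rewrite leq_maxr.
Qed.

Lemma continuous_of_local (f : P -> P) m :
  (forall n x y, cyl (maxn n m) x y -> cyl n (f x) (f y)) -> continuous_map f.
Proof.
move=> hf U hU x hx; case: (hU _ hx) => n hn.
by exists (maxn n m) => y hy; apply: hn; apply: hf.
Qed.

(** * Signatures *)

Fixpoint Pref (m : nat) : finType :=
  match m with 0 => unit | k.+1 => (Pref k * Et k)%type end.

Fixpoint pref (m : nat) (x : P) : Pref m :=
  match m return Pref m with 0 => tt | k.+1 => (pref k x, sval x k) end.

Lemma pref_eq m (x y : P) : pref m x = pref m y <-> cyl m x y.
Proof.
elim: m => [|m IH] /=; first by split => // _ i.
split.
  case=> /IH h1 h2 i; rewrite ltnS leq_eqVlt => /orP [/eqP ->|hi] //.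
  exact: h1.
by move=> h; rewrite (proj2 IH) ?h //; apply: cyl_le h.
Qed.

Definition pref_path m (p : Pref m) : option P :=
  match excluded_middle_informative (exists x : P, pref m x = p) with
  | left h => Some (proj1_sig (constructive_indefinite_description _ h))
  | right _ => None
  end.

Lemma pref_pathP m (p : Pref m) : match pref_path p with
  | Some y => pref m y = p | None => forall x, pref m x <> p end.
Proof.
rewrite /pref_path; case: excluded_middle_informative => [h|h] /=.
  exact: (proj2_sig (constructive_indefinite_description _ h)).
by move=> x e; apply: h; exists x.
Qed.

Definition pref_ends_at m (w : Vt m) (p : Pref m) :=
  exists x : P, pref m x = p /\ src (sval x m) = w.

(* The action of g on the prefixes ending at w, extended by the identity. *)
Definition pref_map m (g : P -> P) (w : Vt m) (p : Pref m) : Pref m :=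
  match pref_path p with
  | Some x => if src (sval x m) == w then pref m (g x) else p
  | None => p
  end.

Lemma pref_map_outside m (g : P -> P) (w : Vt m) p :
  ~ pref_ends_at w p -> pref_map g w p = p.
Proof.
move=> hn; rewrite /pref_map; have := pref_pathP p.
by case: pref_path => [y|] // h; case: eqP => // e; case: hn; exists y.
Qed.

Section PrefMap.
Variables (m : nat) (g : P -> P) (w : Vt m).
Hypothesis gG : in_Gn m g.

Lemma pref_map_pref (x : P) :
  pref_map g w (pref m x) = if src (sval x m) == w then pref m (g x) else pref m x.
Proof.
rewrite /pref_map; have := pref_pathP (pref m x).
case: pref_path => [y|] h; last by case: (h x).
have hc : cyl m y x by apply/pref_eq.
rewrite (cyl_src hc); case: ifP => // _.
by apply/pref_eq; apply: (Gn_cyl gG).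
Qed.

Lemma pref_map_at (x : P) : src (sval x m) = w -> pref_map g w (pref m x) = pref m (g x).
Proof. by move=> e; rewrite pref_map_pref e eqxx. Qed.

Lemma pref_map_inj : injective (pref_map g w).
Proof.
have key p q : pref_ends_at w p -> pref_map g w p = pref_map g w q -> q = p.
  case=> x [<- hx]; rewrite pref_map_at //.
  case: (classic (pref_ends_at w q)) => [[y [<- hy]]|hq].
    rewrite pref_map_at // => /pref_eq h; apply/pref_eq.
    have hs : src (sval y m) = src (sval x m) by rewrite hx hy.
    have hyz : cyl m y (splice m y x) := cyl_splice hs.
    have e : g (splice m y x) = g x.
      apply: path_ext => k; case: (ltnP k m) => hk.
        by rewrite (Gn_cyl gG hyz hk) h.
      by rewrite !(Gn_tail gG) // splice_tail.
    by move: hyz; rewrite (Gn_inj gG e).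
  rewrite pref_map_outside // => e; case: hq; exists (g x); split => //.
  by rewrite (Gn_src gG).
move=> p q e.
case: (classic (pref_ends_at w p)) => hp; first by apply/esym; apply: key e.
case: (classic (pref_ends_at w q)) => hq; first by apply: key hq (esym e).
by move: e; rewrite !pref_map_outside.
Qed.
End PrefMap.

Definition pref_perm m (g : P -> P) (w : Vt m) : {perm Pref m} :=
  match excluded_middle_informative (injective (pref_map g w)) with
  | left h => perm h
  | right _ => 1%g
  end.

Lemma pref_permE m (g : P -> P) (w : Vt m) p : in_Gn m g -> pref_perm g w p = pref_map g w p.
Proof.
move=> hg; rewrite /pref_perm; case: excluded_middle_informative => [h|h].
  by rewrite permE.
by case: h; apply: pref_map_inj.
Qed.

Definition signature m (g : P -> P) (w : Vt m) : bool := odd_perm (pref_perm g w).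

Lemma signatureM m (g h : P -> P) (w : Vt m) : in_Gn m g -> in_Gn m h ->
  signature (g \o h) w = signature g w (+) signature h w.
Proof.
move=> hg hh; rewrite /signature.
have -> : pref_perm (g \o h) w = (pref_perm h w * pref_perm g w)%g.
  apply/permP => p; rewrite permM !pref_permE //; last exact: Gn_comp.
  case: (classic (pref_ends_at w p)) => [[x [<- hx]]|hp]; last by rewrite !pref_map_outside.
  by rewrite (pref_map_at hh hx) (pref_map_at (Gn_comp hg hh) hx) (pref_map_at hg) ?(Gn_src hh).
by rewrite odd_permM addbC.
Qed.

Lemma signature_id m (w : Vt m) : signature id w = false.
Proof.
rewrite /signature; have -> : pref_perm id w = 1%g; last by rewrite odd_perm1.
apply/permP => p; rewrite pref_permE ?perm1; last exact: Gn_id.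
case: (classic (pref_ends_at w p)) => [[x [<- hx]]|hp]; last by rewrite pref_map_outside.
by rewrite pref_map_at //; apply: Gn_id.
Qed.

Lemma path_extend_edge m (y : P) (e : Et m) : src (sval y m) = src e ->
  exists z : P, cyl m y z /\ sval z m = e.
Proof.
move=> hy.
have [z' [_ hz']] : exists z' : P, src (sval z' m.+1) = rng e /\ src (sval z' m.+1) = rng e.
  by apply: path_through2; rewrite ?npaths_diag ?eqxx.
pose s : forall n, Et n := fun n => if n < m then sval y n else
   match m =P n with
   | ReflectT h => eq_rect m (fun k => Et k) e n h
   | ReflectF _ => sval z' n
   end.
have sm : s m = e.
  by rewrite /s ltnn; case: eqP => // h; rewrite (eq_irrelevance h (erefl m)).
have sgt n : m < n -> s n = sval z' n.
  move=> hn; rewrite /s ltnNge ltnW //=; case: eqP => // h.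
  by exfalso; move: hn; rewrite h ltnn.
have ch n : rng (s n) = src (s n.+1).
  case: (ltngtP n.+1 m) => hn.
  - by rewrite /s hn (ltnW hn) (proj2_sig y).
  - move: hn; rewrite ltnS leq_eqVlt => /orP [/eqP en|hn].
      by subst n; rewrite sm sgt.
    by rewrite !sgt // ?(proj2_sig z') // ltnW.
  - by subst m; rewrite sm /s ltnSn (proj2_sig y) hy.
by exists (exist _ s ch); split => // i hi; rewrite /= /s hi.
Qed.

(* A prefix of length m+1 is a prefix of length m together with an edge, and
   g in G_m acts on it through the first component only: a fibrewise
   permutation over the edges into w. *)
Lemma signatureS m (g : P -> P) (w : Vt m.+1) : in_Gn m g ->
  signature g w = \big[addb/false]_(e : Et m | rng e == w) signature g (src e).
Proof.
move=> hg; have hg1 : in_Gn m.+1 g by apply: Gn_mono hg.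
pose s (e : Et m) := if rng e == w then pref_perm g (src e) else 1%g.
rewrite /signature (@odd_fibrewise_perm (Pref m) (Et m) s (pref_perm g w)).
  rewrite [RHS]big_mkcond /=; apply: eq_bigr => e _; rewrite /s.
  by case: ifP => //; rewrite odd_perm1.
move=> a e; rewrite (pref_permE w (a, e) hg1).
case: (classic (pref_ends_at w (a, e))) => [[x [hx hxw]]|hn].
  rewrite -[(a, e)]hx pref_map_at //=.
  case: hx => ha he.
  have hr : rng e == w by rewrite -he (proj2_sig x) hxw.
  rewrite /s hr pref_permE // -ha pref_map_at // ?he //.
  by rewrite (Gn_tail hg) // he.
rewrite pref_map_outside // /s; case: ifP => hr; last by rewrite perm1.
rewrite pref_permE // pref_map_outside // => [[y [hy hys]]].
case: (path_extend_edge hys) => z [hz ze]; apply: hn; exists z; split.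
  by rewrite /= ze -hy; congr pair; apply/pref_eq/cyl_sym.
by rewrite -(proj2_sig z) ze; apply/eqP.
Qed.

(** * Prefix swaps and the even subgroup *)

Section Swap.
Variables (m : nat) (a b : P).
Hypothesis tail_ab : forall k, m <= k -> sval a k = sval b k.
Hypothesis ncyl_ab : ~ cyl m a b.

Definition swap (x : P) : P :=
  if excluded_middle_informative (cyl m a x) then splice m b x
  else if excluded_middle_informative (cyl m b x) then splice m a x
  else x.

Lemma src_ab : src (sval a m) = src (sval b m).
Proof. by rewrite tail_ab. Qed.

Lemma swap_a x : cyl m a x -> swap x = splice m b x.
Proof. by rewrite /swap; case: excluded_middle_informative. Qed.

Lemma swap_b x : cyl m b x -> swap x = splice m a x.
Proof.
move=> h; rewrite /swap; case: excluded_middle_informative => [h'|nh].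
  by case: ncyl_ab; apply: cyl_trans h' (cyl_sym h).
by case: excluded_middle_informative.
Qed.

Lemma swap_out x : ~ cyl m a x -> ~ cyl m b x -> swap x = x.
Proof.
by move=> h1 h2; rewrite /swap; do 2 case: excluded_middle_informative => // ?.
Qed.

Lemma src_b_of_a x : cyl m a x -> src (sval b m) = src (sval x m).
Proof. by move=> h; rewrite -src_ab; apply: cyl_src. Qed.

Lemma src_a_of_b x : cyl m b x -> src (sval a m) = src (sval x m).
Proof. by move=> h; rewrite src_ab; apply: cyl_src. Qed.

Lemma swap_tail x k : m <= k -> sval (swap x) k = sval x k.
Proof.
move=> hk; case: (classic (cyl m a x)) => ha.
  by rewrite swap_a // splice_tail // (src_b_of_a ha).
case: (classic (cyl m b x)) => hb.
  by rewrite swap_b // splice_tail // (src_a_of_b hb).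
by rewrite swap_out.
Qed.

Lemma swapK : involutive swap.
Proof.
move=> x; case: (classic (cyl m a x)) => ha.
  have hs := src_b_of_a ha.
  rewrite (swap_a ha) (swap_b (cyl_splice hs)).
  apply: path_ext => k; rewrite spliceE; last by rewrite splice_tail // (cyl_src ha).
  case: ifP => hk; first by rewrite ha.
  by rewrite splice_tail // leqNgt hk.
case: (classic (cyl m b x)) => hb.
  have hs := src_a_of_b hb.
  rewrite (swap_b hb) (swap_a (cyl_splice hs)).
  apply: path_ext => k; rewrite spliceE; last by rewrite splice_tail // (cyl_src hb).
  case: ifP => hk; first by rewrite hb.
  by rewrite splice_tail // leqNgt hk.
by rewrite !swap_out.
Qed.

Lemma swap_cyl n x y : cyl (maxn n m) x y -> cyl n (swap x) (swap y).
Proof.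
move=> h; have hm : cyl m x y by apply: cyl_le h; rewrite leq_maxr.
move=> i hi; have hxy : sval y i = sval x i.
  by apply: h; apply: leq_trans hi (leq_maxl _ _).
case: (classic (cyl m a x)) => ha.
  have ha' : cyl m a y := cyl_trans ha hm.
  rewrite (swap_a ha) (swap_a ha') (spliceE (src_b_of_a ha)) (spliceE (src_b_of_a ha')).
  by case: ifP => // _; rewrite hxy.
case: (classic (cyl m b x)) => hb.
  have hb' : cyl m b y := cyl_trans hb hm.
  rewrite (swap_b hb) (swap_b hb') (spliceE (src_a_of_b hb)) (spliceE (src_a_of_b hb')).
  by case: ifP => // _; rewrite hxy.
rewrite !swap_out // => h'.
- by apply: ha; apply: cyl_trans h' (cyl_sym hm).
- by apply: hb; apply: cyl_trans h' (cyl_sym hm).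
Qed.

Lemma swap_Gn : in_Gn m swap.
Proof.
split.
- have hc : continuous_map swap by apply: (@continuous_of_local _ m); exact: swap_cyl.
  by exists swap; split; [exact: swapK | split; [exact: swapK | split]].
- by move=> x k hk; apply: swap_tail.
- by move=> x y h; apply: swap_cyl; rewrite maxnn.
Qed.

Lemma signature_swap_base (w : Vt m) : signature swap w = (w == src (sval a m)).
Proof.
rewrite /signature; case: eqP => hw.
  have -> : pref_perm swap w = tperm (pref m a) (pref m b).
    apply/permP => p; rewrite pref_permE; last exact: swap_Gn.
    case: (classic (pref_ends_at w p)) => [[x [<- hx]]|hp].
      rewrite pref_map_at //; last exact: swap_Gn.
      case: (classic (cyl m a x)) => ha.
        rewrite swap_a // (proj2 (pref_eq _ _ _) ha) tpermL.
        by apply/pref_eq/cyl_sym/cyl_splice; apply: src_b_of_a.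
      case: (classic (cyl m b x)) => hb.
        rewrite swap_b // (proj2 (pref_eq _ _ _) hb) tpermR.
        by apply/pref_eq/cyl_sym/cyl_splice; apply: src_a_of_b.
      by rewrite swap_out // tpermD //; apply/eqP => /pref_eq.
    rewrite pref_map_outside // tpermD //; apply/eqP => e; apply: hp.
      by exists a.
    by exists b; rewrite -src_ab.
  by rewrite odd_tperm; apply/eqP => /pref_eq.
have -> : pref_perm swap w = 1%g; last by rewrite odd_perm1.
apply/permP => p; rewrite pref_permE ?perm1; last exact: swap_Gn.
case: (classic (pref_ends_at w p)) => [[x [<- hx]]|hp]; last by rewrite pref_map_outside.
rewrite pref_map_at //; last exact: swap_Gn.
rewrite swap_out // => h; apply: hw; rewrite -hx.
  exact/esym/cyl_src.
by rewrite src_ab; apply/esym/cyl_src.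
Qed.

Lemma signature_swap k (w : Vt k) : m <= k ->
  signature swap w = odd (npaths (src (sval a m)) w).
Proof.
move=> hk; move: w; rewrite -(subnK hk); move: (k - m) => d {hk}.
elim: d => [|d IH] w.
  by rewrite signature_swap_base npaths_diag oddb eq_sym.
rewrite signatureS; last by apply: Gn_mono swap_Gn; rewrite leq_addl.
rewrite npathsS ?leq_addl // (big_morph odd oddD (erefl : odd 0 = false)).
by apply: eq_bigr => e _; rewrite IH.
Qed.

End Swap.

Definition even_elt (h : P -> P) := in_G h /\
  eventually (fun M => in_Gn M h /\ forall w : Vt M, signature h w = false).

Lemma signature_inv M (g g' : P -> P) (w : Vt M) : in_Gn M g -> in_Gn M g' ->
  cancel g' g -> signature g' w = signature g w.
Proof.
move=> gM g'M c; have e : g \o g' = id by apply: functional_extensionality => x /=; rewrite c.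
have := signatureM w gM g'M; rewrite e signature_id.
by case: (signature g w); case: (signature g' w).
Qed.

Lemma even_elt_normal : normal_subgroup_of_G even_elt.
Proof.
split.
- by move=> h [].
- split; first by exists 0; apply: Gn_id.
  by exists 0 => M _; split => [|w]; [apply: Gn_id | apply: signature_id].
- move=> g h [gG eg] [hG eh]; split; first exact: in_G_comp.
  case: (eventually_and eg eh) => K HK; exists K => M hM.
  have [[gM sg] [hM' sh]] := HK M hM.
  by split => [|w]; [exact: Gn_comp | rewrite signatureM // sg sh].
- move=> h h' [hG eh] h'G _ c; split => //.
  case: (eventually_and eh (in_G_eventually h'G)) => K HK; exists K => M hM.
  have [[hM' sh] h'M] := HK M hM; split => // w.
  by rewrite (signature_inv w hM' h'M c) sh.
- move=> g g' h gG g'G _ c [hG eh]; split; first by apply: in_G_comp => //; apply: in_G_comp.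
  have [K HK] := eventually_and eh
    (eventually_and (in_G_eventually gG) (in_G_eventually g'G)).
  exists K => M hM; have [[hM' sh] [gM g'M]] := HK M hM.
  have ghM : in_Gn M (g \o h) := Gn_comp gM hM'.
  split=> [|w]; first exact: Gn_comp ghM g'M.
  rewrite (signatureM w ghM g'M) (signatureM w gM hM') sh.
  by rewrite (signature_inv w gM g'M c) addbF addbb.
Qed.

(** * Consequences of minimality and simplicity *)

Lemma three_prefixes : cantor_path_space B -> G_minimal B ->
  exists m (a b c : P), [/\ forall k, m <= k -> sval a k = sval b k,
    forall k, m <= k -> sval a k = sval c k,
    ~ cyl m a b, ~ cyl m a c & ~ cyl m b c].
Proof.
case=> [[x1] iso] hm.
case: (iso x1 0) => y [_ ny]; case: (path_neq_edge ny) => i hi.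
case: (iso x1 i.+1) => z [hz nz]; case: (path_neq_edge nz) => j hj.
have hij : i < j.
  by rewrite ltnNge; apply/negP => hji; apply: hj; apply/esym; apply: (hz j); rewrite ltnS.
case: (hm x1 y j.+1) => g2 [[k2 G2] c2].
case: (hm x1 z j.+1) => g3 [[k3 G3] c3].
pose m := maxn j.+1 (maxn k2 k3).
have hjm : j.+1 <= m by rewrite leq_maxl.
have G2' : in_Gn m g2.
  by apply: Gn_mono G2; rewrite /m (leq_trans _ (leq_maxr _ _)) // leq_maxl.
have G3' : in_Gn m g3.
  by apply: Gn_mono G3; rewrite /m (leq_trans _ (leq_maxr _ _)) // leq_maxr.
have hjm' : i < j.+1 by rewrite ltnW.
exists m, x1, (g2 x1), (g3 x1); split.
- by move=> k hk; rewrite (Gn_tail G2').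
- by move=> k hk; rewrite (Gn_tail G3').
- by move=> h; apply: hi; rewrite -(c2 i) ?h //; apply: leq_trans hjm.
- by move=> h; apply: hj; rewrite -(c3 j) ?h.
- move=> h; apply: hi; rewrite -(c2 i) // -h; last by apply: leq_trans hjm.
  by rewrite (c3 i) // hz.
Qed.

Section Koenig.
Variables (n : nat) (Q : forall M, Vt M -> Prop).
Hypothesis Q_src : forall M (e : Et M), n <= M -> Q (rng e) -> Q (src e).

Definition sees_Q M (u : Vt M) := forall K, M <= K -> n <= K ->
  exists w : Vt K, 0 < npaths u w /\ Q w.

Lemma not_sees_Q_up M (u : Vt M) K : M <= K -> n <= K ->
  (forall w : Vt K, ~ (0 < npaths u w /\ Q w)) ->
  forall K', K <= K' -> forall w : Vt K', ~ (0 < npaths u w /\ Q w).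
Proof.
move=> h1 h2 hb; elim=> [|K' IH] hK w.
  by move: hK; rewrite leqn0 => /eqP e; subst K.
case: (ltngtP K K'.+1) => h3.
- move=> [hp hq].
  case: (npaths_gt0_last (leq_trans h1 h3) hp) => e [he hp'].
  apply: (IH h3 (src e)); split => //.
  by apply: Q_src; [exact: leq_trans h2 h3 | rewrite he].
- by move: hK; rewrite leqNgt h3.
- by subst K; apply: hb.
Qed.

Lemma sees_Q_step M (u : Vt M) : sees_Q u -> exists e : Et M, src e = u /\ sees_Q (rng e).
Proof.
move=> hu; apply: NNPP => hno.
have H (e : Et M) : eventually (fun K => src e = u -> M.+1 <= K -> n <= K ->
    forall w : Vt K, ~ (0 < npaths (rng e) w /\ Q w)).
  case: (classic (src e = u)) => he; last by exists 0.
  have hi : ~ sees_Q (rng e) by move=> hi; apply: hno; exists e.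
  apply: NNPP => hK; apply: hi => K h1 h2; apply: NNPP => hw.
  apply: hK; exists K => K' hK' _ _ _.
  by apply: (not_sees_Q_up h1 h2) => // w hw'; apply: hw; exists w.
case: (eventually_forall H) => K HK.
pose K' := maxn K (maxn M.+1 n).
have hK : K <= K' by rewrite leq_maxl.
have h1 : M.+1 <= K' by rewrite (leq_trans _ (leq_maxr _ _)) // leq_maxl.
have h2 : n <= K' by rewrite (leq_trans _ (leq_maxr _ _)) // leq_maxr.
case: (hu K' (ltnW h1) h2) => w [hp hq].
case: (npaths_gt0_first h1 hp) => e [he hp'].
exact: (HK K' hK e he h1 h2 w).
Qed.

Lemma koenig_path : (forall M, n <= M -> exists w : Vt M, Q w) ->
  exists x : P, forall M, n <= M -> Q (src (sval x M)).
Proof.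
move=> hQ.
have [x hx] : exists x : P, forall M, sees_Q (src (sval x M)).
  apply: exists_path_through => [v0 K _ hK|M u]; last exact: sees_Q_step.
  by case: (hQ K hK) => w hw; exists w; rewrite npaths_root_gt0.
exists x => M hM; case: (hx M M (leqnn _) hM) => w [hp hq].
by rewrite (npaths_diag_gt0 hp).
Qed.
End Koenig.

Section SimpleMinimal.
Hypotheses (hc : cantor_path_space B) (hm : G_minimal B) (hs : G_simple_nontrivial B).

Lemma npaths_gt0_eventually n (v : Vt n) :
  eventually (fun M => forall w : Vt M, 0 < npaths v w).
Proof.
apply: NNPP => hneg.
have hz M : n <= M -> exists w : Vt M, npaths v w = 0.
  move=> hM; apply: NNPP => h; apply: hneg; exists M.
  apply: npaths_gt0_up => // w; rewrite lt0n; apply/eqP => e; apply: h; by exists w.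
have [x hx] := koenig_path (Q := fun M (w : Vt M) => npaths v w = 0)
  (fun M e hM => npaths_eq0_src hM) hz.
have [y [hy _]] : exists y : P, src (sval y n) = v /\ src (sval y n) = v.
  by apply: path_through2; rewrite ?npaths_diag ?eqxx.
case: (hm x y n.+1) => g [[k gk] cy].
have gM : in_Gn (maxn k n) g by apply: Gn_mono gk; rewrite leq_maxl.
have := npaths_along_path (g x) (leq_maxr k n).
by rewrite (Gn_src gM) (cy n) // hy hx ?leq_maxr.
Qed.

(* The product of the swaps of a with b and of a with c has vanishing
   signatures from level m on, and it moves a. *)
Lemma even_elt_all (g : P -> P) : in_G g -> even_elt g.
Proof.
case: hs => _ /(_ _ even_elt_normal) [htriv|]; last exact.
exfalso; case: (three_prefixes hc hm) => m [a [b [c [tab tac nab nac nbc]]]].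
pose h := swap m a b \o swap m a c.
have hG : in_Gn m h by apply: Gn_comp; apply: swap_Gn.
have hN : even_elt h.
  split; first by exists m.
  exists m => M hM; split; first exact: Gn_mono hM hG.
  move=> w; rewrite signatureM; try exact: Gn_mono hM (swap_Gn _ _).
  by rewrite (signature_swap tab nab) // (signature_swap tac nac) // addbb.
have := htriv h hN a; rewrite /h /= (swap_a c (fun _ _ => erefl)).
have hs' : src (sval c m) = src (sval a m) by rewrite -tac.
have hcy : cyl m c (splice m c a) := cyl_splice hs'.
rewrite swap_out // => [e|h'|h'].
- by apply: nac; apply: cyl_sym; move: hcy; rewrite e.
- by apply: nac; apply: cyl_trans h' (cyl_sym hcy).
- by apply: nbc; apply: cyl_trans h' (cyl_sym hcy).
Qed.

Lemma npaths_even_of_prefixes L (a b : P) :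
  src (sval a L) = src (sval b L) -> ~ cyl L a b ->
  eventually (fun M => forall w : Vt M, ~~ odd (npaths (src (sval a L)) w)).
Proof.
move=> hab nab.
pose b' := splice L b a.
have tl k : L <= k -> sval a k = sval b' k by move=> hk; rewrite splice_tail.
have nab' : ~ cyl L a b'.
  by move=> h; apply: nab; apply: cyl_trans h (cyl_sym (cyl_splice (esym hab))).
have [_ [k H]] := even_elt_all (ex_intro _ L (swap_Gn tl nab')).
exists (maxn k L) => M hM w.
have [_ h2] := H M (leq_trans (leq_maxl _ _) hM).
by rewrite -(signature_swap tl nab') ?h2 // (leq_trans (leq_maxr _ _) hM).
Qed.

Lemma two_prefixes_eventually : eventually (fun L => forall w : Vt L,
  exists a b : P, [/\ src (sval a L) = w, src (sval b L) = w & ~ cyl L a b]).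
Proof.
case: hc => [[x1] iso].
case: (iso x1 0) => y [_ ny]; case: (path_neq_edge ny) => i hi.
have [K HK] := eventually_forall (fun u : Vt i.+1 => npaths_gt0_eventually u).
exists (maxn K i.+1) => L hL w.
have hiL : i.+1 <= L by apply: leq_trans hL; rewrite leq_maxr.
have hKL : K <= L by apply: leq_trans hL; rewrite leq_maxl.
case: (path_through2 hiL (HK L hKL (src (sval x1 i.+1)) w)) => z1 [h11 h12].
case: (path_through2 hiL (HK L hKL (src (sval y i.+1)) w)) => z2 [h21 h22].
exists (splice i.+1 x1 z1), (splice i.+1 y z2); split; rewrite ?splice_tail //.
move=> /(cyl_le hiL) h; apply: hi.
by rewrite -(cyl_splice (esym h11) (ltnSn i)) -(h i) // (cyl_splice (esym h21) (ltnSn i)).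
Qed.

(* Count the paths through a level at which every vertex ends two prefixes. *)
Lemma npaths_even_eventually n (v : Vt n) :
  eventually (fun M => forall w : Vt M, ~~ odd (npaths v w)).
Proof.
case: two_prefixes_eventually => L1 HL.
pose L := maxn L1 n.
have hnL : n <= L by rewrite leq_maxr.
have H (u : Vt L) : eventually (fun M => forall w : Vt M, ~~ odd (npaths u w)).
  case: (HL L (leq_maxl _ _) u) => a [b [<- hb nab]].
  by apply: npaths_even_of_prefixes nab; rewrite hb.
case: (eventually_forall H) => K HK.
exists (maxn K L) => M hM w.
rewrite (npaths_split v w hnL (leq_trans (leq_maxr _ _) hM)).
rewrite (big_morph odd oddD (erefl : odd 0 = false)) big1 // => u _.
by rewrite oddM (negbTE (HK M (leq_trans (leq_maxl _ _) hM) u w)) andbF.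
Qed.

Lemma npaths_even_pos_eventually n (v : Vt n) :
  eventually (fun M => forall w : Vt M, 2 <= npaths v w /\ ~~ odd (npaths v w)).
Proof.
case: (eventually_and (npaths_gt0_eventually v) (npaths_even_eventually v)) => K HK.
exists K => M hM w; have [hpos hev] := HK M hM.
by move: (hpos w) (hev w); case: (npaths v w) => [|[|p]].
Qed.

End SimpleMinimal.
End Bratteli.

Theorem mainTheorem4 (B : bratteli) :
  cantor_path_space B -> G_minimal B -> G_simple_nontrivial B ->
  telescopable_even B.
Proof.
move=> hc hm hs.
have [m [m0 m_lt m_even]] := increasing_chain (fun n =>
  eventually_forall (fun v : V B n => npaths_even_pos_eventually hc hm hs v)).
by exists m; split => // i v w; apply: m_even.
Qed.
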